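(* Let $X$ be a finite $d$-dimensional CW-complex with set $S_d$ of (oriented) $d$-cells, and let $V_0\subset S_d$ be a spanning forest of $X$. Let $N=|S_d-V_0|$ and enumerate $S_d-V_0$ as $e_1,\dots,e_N$. Then $$\det((U+1)\,Id-Mesh(X;\{z(e_a)\},geometric))=\det(U\,Id-Mesh^\#(X;\{z(e_a)\},geometric))=U^N+\sum_{j=1}^N(-1)^j c_j U^{N-j},$$ where $$c_j=\sum_{V}\left(\frac{t_{d-1}(X_V)}{t_{d-1}(X_{V_0})}\right)^2,$$ the sum being over all spanning forests $V$ of $X$ with $|V\cap(S_d-V_0)|=j$.
   Context: $X^{d-1}$ is the $(d-1)$-skeleton, and for $V\subset S_d$, $X_V=X^{d-1}\cup V$. $C_d(\cdot;\mathbb R)$ denotes cellular chains, with the inner product making the oriented $d$-cells orthonormal; $\partial_d$ is the cellular boundary and $B_{d-1}$ the $(d-1)$-boundaries. A subset $V\subset S_d$ is a spanning forest of $X$ if the composite $C_d(X_V;\mathbb R)\xrightarrow{\partial_d}B_{d-1}(X_V;\mathbb R)\subset B_{d-1}(X;\mathbb R)$ is an isomorphism. For a finite CW complex $Y$, $t_{d-1}(Y)$ is the order of the torsion subgroup of $H_{d-1}(Y;\mathbb Z)$. Given the spanning forest $V_0$, for each $e\in S_d-V_0$ there is a unique $D(e)\in C_d(X_{V_0};\mathbb R)$ with $\partial_d D(e)=\partial_d e$; put $z(e)=e-D(e)\in Z_d(X;\mathbb R)$ (the geometric basis of $Z_d(X;\mathbb R)$). Then $Mesh(X;\{z(e_a)\},geometric)=(\langle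 z(e_a),z(e_b)\rangle)_{a,b=1}^N$, which equals $Id+Mesh^\#(X;\{z(e_a)\},geometric)$ with $Mesh^\#(X;\{z(e_a)\},geometric)=(\langle D(e_a),D(e_b)\rangle)_{a,b=1}^N$. *)

From HB Require Import structures.
From mathcomp Require Import all_boot all_order all_algebra.
From mathcomp Require Import boolp reals.
From Stdlib Require Import ClassicalEpsilon.

Unset Printing Implicit Defensive.
Import Order.TTheory GRing.Theory Num.Theory.
Local Open Scope ring_scope.

(* A finite d-dimensional CW complex is represented by its cellular chain
   complex: ncell k = number of (oriented) k-cells, the k-cells being indexed
   by 'I_(ncell k); bd k : 'M[int]_(ncell k, ncell k.+1) is the cellular
   boundary map C_{k+1} -> C_k acting on column vectors. *)
Record cw_chain (d : nat) := CWChain {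
  ncell : nat -> nat;
  bd : forall k, 'M[int]_(ncell k, ncell k.+1);
  bd_bd : forall k, bd k *m bd k.+1 = 0;
  ncell_dim : forall k, (d < k)%N -> ncell k = 0%N }.
Arguments ncell {d}.
Arguments bd {d}.

Definition cbd {d} (X : cw_chain d) (k : nat) : 'M[int]_(ncell X k.-1, ncell X k) :=
  match k return 'M[int]_(ncell X k.-1, ncell X k) with
  | 0 => 0
  | k'.+1 => bd X k'
  end.

Definition supp_in {R : nmodType} {n} (x : 'cV[R]_n) (V : {set 'I_n}) :=
  forall i, i \notin V -> x i ord0 = 0.

(* ---- integral homology H_{d-1}(X_V; Z), X_V = X^{d-1} \cup V ---- *)
Definition bnd_int {d} (X : cw_chain d) (V : {set 'I_(ncell X d)})
  (y : 'cV[int]_(ncell X d.-1)) :=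
  exists x : 'cV[int]_(ncell X d), supp_in x V /\ y = cbd X d *m x.

Definition cyc_int {d} (X : cw_chain d) (y : 'cV[int]_(ncell X d.-1)) :=
  cbd X d.-1 *m y = 0.

(* representatives of torsion classes of H_{d-1}(X_V;Z) = Z_{d-1}/B_{d-1}(X_V) *)
Definition tors_int {d} (X : cw_chain d) (V : {set 'I_(ncell X d)})
  (y : 'cV[int]_(ncell X d.-1)) :=
  cyc_int X y /\ exists k : int, k != 0 /\ bnd_int X V (k *: y).

Definition is_tors_order {d} (X : cw_chain d) (V : {set 'I_(ncell X d)}) (n : nat) :=
  exists f : 'I_n -> 'cV[int]_(ncell X d.-1),
    [/\ forall i, tors_int X V (f i),
        forall i j, bnd_int X V (f i - f j) -> i = j &
        forall y, tors_int X V y -> exists i, bnd_int X V (y - f i)].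

Definition tors_order {d} (X : cw_chain d) (V : {set 'I_(ncell X d)}) : nat :=
  epsilon (inhabits 0%N) (is_tors_order X V).

Definition bdR (R : realType) {d} (X : cw_chain d) : 'M[R]_(ncell X d.-1, ncell X d) :=
  map_mx (fun z : int => z%:~R) (cbd X d).

(* V is a spanning forest: C_d(X_V;R) -> B_{d-1}(X_V;R) \subset B_{d-1}(X;R)
   is an isomorphism (injective, and onto B_{d-1}(X;R)) *)
Definition spanning_forest (R : realType) {d} (X : cw_chain d)
  (V : {set 'I_(ncell X d)}) :=
  (forall x : 'cV[R]_(ncell X d), supp_in x V -> bdR R X *m x = 0 -> x = 0) /\
  (forall x : 'cV[R]_(ncell X d),
     exists x', supp_in x' V /\ bdR R X *m x' = bdR R X *m x).

Definition cdot {R : realType} {n} (x y : 'cV[R]_n) : R := \sum_i x i ord0 * y i ord0.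

Definition cell (R : realType) {n} (c : 'I_n) : 'cV[R]_n := delta_mx c ord0.

(* Since each D(e_a) is supported on V0 while z(e_a) has e_a-coordinate 1,
   Mesh = Id + Mesh^#, and Mesh^# = P^T P where the columns of P are the
   V0-coordinates of the D(e_a).  By Sylvester's determinant identity,
   U^|V0| det(U - P^T P) = U^N det(U - P P^T), and U - P P^T = A diag(y) A^T for
   the |V0| x S_d matrix A = [Id | P] of V0-coordinates of all the D(c), with
   y = U on V0 and y = -1 off V0.  Cauchy-Binet expands this determinant over
   the |V0|-subsets V of S_d.  The minor det A_V is non-zero exactly when V is
   a spanning forest, and then |det A_V| = t_{d-1}(X_V) / t_{d-1}(X_V0): the
   restricted boundary maps satisfy ∂_V = ∂_V0 A_V, and by the Smith normal
   form t_{d-1}(X_V) is the product of the invariant factors of ∂_V. *)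

From HB Require Import structures.
From mathcomp Require Import all_boot all_order all_algebra fingroup perm zify.
From mathcomp Require Import boolp reals ring.
From Stdlib Require Import ClassicalEpsilon.
Import Order.TTheory GRing.Theory Num.Theory.
Local Open Scope ring_scope.

Set Implicit Arguments.
Unset Strict Implicit.

(** * Sums over finite sets *)

Lemma imsetT_codom (T T' : finType) (f : T -> T') : [set f i | i : T] =i codom f.
Proof. by move=> c; apply/imsetP/codomP => [[i _ ->] | [i ->]]; exists i. Qed.

Lemma enum_val_codom (T : finType) (V : {set T}) : V =i codom (@enum_val T (mem V)).
Proof.
move=> c; apply/idP/codomP => [cV | [j ->]]; last exact: enum_valP.
by exists (enum_rank_in cV c); rewrite enum_rankK_in.
Qed.

Lemma big_codom (Rg : Type) (idx : Rg) (op : Monoid.com_law idx) (I J : finType)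
    (f : I -> J) (V : {set J}) (G : J -> Rg) :
  injective f -> V =i codom f -> \big[op/idx]_(c in V) G c = \big[op/idx]_i G (f i).
Proof.
move=> f_inj fV; have -> : V = [set f i | i : I].
  by apply/setP => c; rewrite fV imsetT_codom.
by rewrite big_imset //= => i j _ _ /f_inj.
Qed.

Lemma sum_codom_split (Rg : nmodType) m r N (f : 'I_r -> 'I_m) (g : 'I_N -> 'I_m)
    (V : {set 'I_m}) (G : 'I_m -> Rg) :
  injective f -> injective g -> V =i codom f -> ~: V =i codom g ->
  \sum_c G c = \sum_i G (f i) + \sum_a G (g a).
Proof.
move=> f_inj g_inj fV gV; rewrite (bigID (mem V)) /= (big_codom _ _ f_inj fV).
by rewrite -(big_codom _ _ g_inj gV); congr (_ + _); apply: eq_bigl => c; rewrite inE.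
Qed.

Lemma sum_inj_ffun_image (Rg : nmodType) (T : finType) r (G : {set T} -> Rg) :
  \sum_(f : {ffun 'I_r -> T} | injectiveb f) G [set f i | i : 'I_r] =
  (\sum_(V : {set T} | #|V| == r) G V) *+ r`!.
Proof.
rewrite (partition_big (fun f : {ffun 'I_r -> T} => [set f i | i : 'I_r])
                       (fun V => #|V| == r)) /=; last first.
  by move=> f /injectiveP f_inj; rewrite card_imset // card_ord.
rewrite -sumrMnl; apply: eq_bigr => V /eqP Vr.
rewrite (eq_bigr (fun _ => G V)) => [|f /andP [_ /eqP ->] //].
rewrite sumr_const; congr (_ *+ _).
have -> : r`! = (#|V| ^_ #|'I_r|)%N by rewrite Vr card_ord ffactnn.
rewrite -card_inj_ffuns_on.
apply: eq_card => f; rewrite inE unfold_in /=.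
have [/injectiveP f_inj | _] := boolP (injectiveb f); last by rewrite !andbF.
rewrite !andbT; apply/eqP/ffun_onP => [<- i | fV]; first exact: imset_f.
apply/eqP; rewrite eqEcard card_imset // Vr card_ord leqnn andbT.
by apply/subsetP => _ /imsetP [i _ ->]; apply: fV.
Qed.

Lemma sum_partition_nat (Rg : nmodType) (T : finType) (P : pred T) (s : T -> nat) N
    (G : T -> nat -> Rg) : (forall V, P V -> (s V < N)%N) ->
  \sum_(V | P V) G V (s V) = \sum_(0 <= j < N) \sum_(V | P V && (s V == j)) G V j.
Proof.
move=> sN; rewrite -(exchange_big_dep xpredT) //=; apply: eq_bigr => V PV.
by under eq_bigl do rewrite eq_sym; rewrite big_nat1_eq sN.
Qed.

(** * Determinant identities *)

Lemma det_mulmx_ffun (Rg : comPzRingType) r m (A : 'M[Rg]_(r, m)) (B : 'M[Rg]_(m, r)) :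
  \det (A *m B) = \sum_(f : {ffun 'I_r -> 'I_m})
      (\prod_i A i (f i)) * \det (rowsub f B).
Proof.
transitivity (\sum_(s : 'S_r) \sum_(f : {ffun 'I_r -> 'I_m})
   (-1) ^+ s * \prod_i (A i (f i) * B (f i) (s i))).
  apply: eq_bigr => s _; rewrite -big_distrr /=; congr (_ * _).
  rewrite -(bigA_distr_bigA (fun i k => A i k * B k (s i))) /=.
  by apply: eq_bigr => i _; rewrite mxE.
rewrite exchange_big; apply: eq_bigr => f _ /=.
rewrite big_distrr /=; apply: eq_bigr => s _.
rewrite big_split /= mulrCA; congr (_ * (_ * _)).
by apply: eq_bigr => i _; rewrite mxE.
Qed.

(* Cauchy-Binet for [A diag(y) A^T], summed over all maps rather than over
   subsets, whence the factor [r`!]. *)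
Lemma cauchy_binet_sqr (Rg : comPzRingType) r m (A : 'M[Rg]_(r, m)) (y : 'rV[Rg]_m) :
  r`!%:R * \det (A *m (diag_mx y *m A^T)) =
  \sum_(f : {ffun 'I_r -> 'I_m}) (\prod_i y 0 (f i)) * \det (colsub f A) ^+ 2.
Proof.
pose T (f : {ffun 'I_r -> 'I_m}) := (\prod_i y 0 (f i)) * \det (colsub f A).
have rowsubE (f : {ffun 'I_r -> 'I_m}) : \det (rowsub f (diag_mx y *m A^T)) = T f.
  have -> : rowsub f (diag_mx y *m A^T) = diag_mx (colsub f y) *m (colsub f A)^T.
    by apply/matrixP => i j; rewrite !mul_diag_mx !mxE.
  by rewrite det_mulmx det_diag det_tr; under eq_bigr do rewrite mxE.
rewrite det_mulmx_ffun; under eq_bigr do rewrite rowsubE.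
set S := \sum_f _.
have S_perm (s : 'S_r) : S = \sum_(f : {ffun 'I_r -> 'I_m})
    (-1) ^+ s * (\prod_i A i (f (s i))) * T f.
  pose h (f : {ffun 'I_r -> 'I_m}) := [ffun i => f (s i)].
  have h_inj : injective h.
    move=> f1 f2 /ffunP E; apply/ffunP => j.
    by have := E (s^-1 j)%g; rewrite !ffunE permKV.
  rewrite /S (reindex_inj h_inj); apply: eq_bigr => f _.
  have -> : T (h f) = (-1) ^+ s * T f.
    rewrite /T mulrCA; congr (_ * _).
      rewrite [RHS](reindex_inj (@perm_inj _ s)); apply: eq_bigr => i _.
      by rewrite ffunE.
    have -> : colsub (h f) A = col_perm s (colsub f A).
      by apply/matrixP => i j; rewrite !mxE ffunE.
    by rewrite col_permE det_mulmx det_perm odd_permV mulrC.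
  rewrite mulrCA mulrA; congr (_ * _ * _).
  by apply: eq_bigr => i _; rewrite ffunE.
transitivity (\sum_(s : 'S_r) S); first by rewrite sumr_const card_Sn mulr_natl.
under eq_bigr => s _ do rewrite (S_perm s).
rewrite exchange_big; apply: eq_bigr => f _ /=.
rewrite -big_distrl /=.
have -> : \sum_(s : 'S_r) (-1) ^+ s * \prod_i A i (f (s i)) = \det (colsub f A).
  by apply: eq_bigr => s _; congr (_ * _); apply: eq_bigr => i _; rewrite mxE.
by rewrite /T expr2 mulrC mulrA.
Qed.

Lemma det_sub_mulmxC (Rg : comPzRingType) r N (x : Rg)
    (A : 'M[Rg]_(r, N)) (B : 'M[Rg]_(N, r)) :
  x ^+ N * \det (x%:M - A *m B) = x ^+ r * \det (x%:M - B *m A).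
Proof.
pose M := block_mx (x%:M) A B (1%:M : 'M_N).
have M_ut : M *m block_mx 1%:M 0 (- B) 1%:M = block_mx (x%:M - A *m B) A 0 1%:M.
  rewrite mulmx_block; congr block_mx.
  - by rewrite mulmx1 mulmxN.
  - by rewrite mulmx0 mulmx1 add0r.
  - by rewrite mulmx1 mulmxN mul1mx addrN.
  - by rewrite mulmx0 mulmx1 add0r.
have M_lt : block_mx 1%:M 0 (- B) x%:M *m M = block_mx x%:M A 0 (x%:M - B *m A).
  rewrite mulmx_block; congr block_mx.
  - by rewrite mul1mx mul0mx addr0.
  - by rewrite mul1mx mul0mx addr0.
  - by rewrite mulNmx mul_mx_scalar mul_scalar_mx addNr.
  - by rewrite mulmx1 mulNmx addrC.
have := congr1 determinant M_ut; have := congr1 determinant M_lt.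
rewrite !det_mulmx det_lblock det_ublock !det1 det_lblock det_ublock !det_scalar.
by rewrite !expr1n !mul1r !mulr1 => <- <-.
Qed.

Lemma mul_diag_tr_split (Rg : pzSemiRingType) r m k N (A : 'M[Rg]_(r, m)) (y : 'rV[Rg]_m)
    (f : 'I_k -> 'I_m) (g : 'I_N -> 'I_m) (V : {set 'I_m}) :
  injective f -> injective g -> V =i codom f -> ~: V =i codom g ->
  A *m (diag_mx y *m A^T) =
    colsub f A *m (diag_mx (colsub f y) *m (colsub f A)^T) +
    colsub g A *m (diag_mx (colsub g y) *m (colsub g A)^T).
Proof.
move=> f_inj g_inj fV gV; apply/matrixP => i j; rewrite !mul_diag_mx !mxE.
rewrite (sum_codom_split _ f_inj g_inj fV gV); congr (_ + _).
  by apply: eq_bigr => c _; rewrite !mxE.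
by apply: eq_bigr => a _; rewrite !mxE.
Qed.

(** * Forests of a matrix *)

Section Selection.
Variables (Rg : pzSemiRingType) (m r : nat) (f : 'I_r -> 'I_m).

Definition sel_mx : 'M[Rg]_(m, r) := colsub f 1%:M.

Lemma mulmx_sel p (A : 'M[Rg]_(p, m)) : A *m sel_mx = colsub f A.
Proof. by rewrite mulmx_colsub mulmx1. Qed.

Lemma rowsub_sel : injective f -> rowsub f sel_mx = 1%:M.
Proof. by move=> f_inj; apply/matrixP => i j; rewrite !mxE (inj_eq f_inj). Qed.

Variables (V : {set 'I_m}) (fV : V =i codom f).

Lemma supp_sel_mulmx (u : 'cV[Rg]_r) : supp_in (sel_mx *m u) V.
Proof.
move=> c cV; rewrite mxE big1 // => j _; rewrite !mxE.
have /negbTE -> : c != f j by apply: contraNneq cV => ->; rewrite fV codom_f.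
by rewrite mul0r.
Qed.

Lemma sel_mulmx_rowsub p (x : 'M[Rg]_(m, p)) : injective f ->
  (forall c k, c \notin V -> x c k = 0) -> sel_mx *m rowsub f x = x.
Proof.
move=> f_inj x_supp; apply/matrixP => c k; rewrite mxE.
have [cV | cNV] := boolP (c \in V); last first.
  rewrite x_supp // big1 // => j _; rewrite !mxE.
  have /negbTE -> : c != f j by apply: contraNneq cNV => ->; rewrite fV codom_f.
  by rewrite mul0r.
have /codomP [j ->] : c \in codom f by rewrite -fV.
rewrite (bigD1 j) //= big1 => [|j' j'j]; first by rewrite !mxE eqxx mul1r addr0.
by rewrite !mxE (inj_eq f_inj) eq_sym (negbTE j'j) mul0r.
Qed.

Lemma sel_mulmx_rowsub_supp (x : 'cV[Rg]_m) : injective f ->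
  supp_in x V -> sel_mx *m rowsub f x = x.
Proof.
by move=> f_inj x_supp; apply: sel_mulmx_rowsub => // c k /x_supp; rewrite (ord1 k).
Qed.

Lemma tr_sel_mulmx p (x : 'M[Rg]_(m, p)) : sel_mx^T *m x = rowsub f x.
Proof. by rewrite trmx_mxsub trmx1 mul_rowsub_mx mul1mx. Qed.

End Selection.

Arguments sel_mx {Rg m r} f.
Arguments rowsub_sel {Rg m r f}.

Lemma mxrank_inj (F : fieldType) n p (A : 'M[F]_(n, p)) :
  (forall x : 'cV_p, A *m x = 0 -> x = 0) -> \rank A = p.
Proof.
move=> A_inj; rewrite -mxrank_tr; apply/eqP; change (row_free A^T); rewrite -kermx_eq0.
apply/eqP/row_matrixP => i; rewrite row0.
have /sub_kermxP KA : (row i (kermx A^T) <= kermx A^T)%MS by exact: row_sub.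
have : A *m (row i (kermx A^T))^T = 0 by rewrite -[A *m _]trmxK trmx_mul trmxK KA trmx0.
by move/A_inj/(congr1 trmx); rewrite trmxK trmx0.
Qed.

Lemma mxrank_le_span (F : fieldType) n p q (A : 'M[F]_(n, p)) (B : 'M_(n, q)) :
  (forall x : 'cV_q, exists u, A *m u = B *m x) -> (\rank B <= \rank A)%N.
Proof.
move=> span; rewrite -mxrank_tr -[\rank A]mxrank_tr; apply: mxrankS.
apply/row_subP => c; have [u Au] := span (delta_mx c 0).
by rewrite -tr_col colE -Au trmx_mul submxMl.
Qed.

Definition forest (F : fieldType) n m (B : 'M[F]_(n, m)) (V : {set 'I_m}) :=
  (forall x : 'cV[F]_m, supp_in x V -> B *m x = 0 -> x = 0) /\
  (forall x : 'cV[F]_m, exists x', supp_in x' V /\ B *m x' = B *m x).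

Section Forest.
Variables (F : fieldType) (n m : nat) (B : 'M[F]_(n, m)).

Lemma forest_colsubP (V : {set 'I_m}) r (f : 'I_r -> 'I_m) : injective f -> V =i codom f ->
  forest B V <-> (forall x : 'cV_r, colsub f B *m x = 0 -> x = 0) /\
                 (forall x : 'cV_m, exists u, colsub f B *m u = B *m x).
Proof.
move=> f_inj fV; split=> [[B_inj B_span] | [A_inj A_span]]; split=> x.
- move=> Ax; have Bsel : sel_mx f *m x = 0.
    by apply: B_inj; [exact: supp_sel_mulmx | rewrite mulmxA mulmx_sel].
  rewrite -[x]mul1mx -(rowsub_sel f_inj) mul_rowsub_mx Bsel.
  by apply/matrixP => i j; rewrite !mxE.
- have [x' [x'_supp Bx']] := B_span x; exists (rowsub f x').
  by rewrite -mulmx_sel -mulmxA (sel_mulmx_rowsub_supp fV).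
- move=> x_supp; rewrite -(sel_mulmx_rowsub_supp fV f_inj x_supp) mulmxA mulmx_sel.
  by move/A_inj ->; rewrite mulmx0.
- have [u Au] := A_span x; exists (sel_mx f *m u); split; first exact: supp_sel_mulmx.
  by rewrite mulmxA mulmx_sel.
Qed.

Lemma forest_card (V : {set 'I_m}) : forest B V -> #|V| = \rank B.
Proof.
case/(forest_colsubP (@enum_val_inj _ (mem V)) (enum_val_codom V)) => A_inj A_span.
rewrite -(mxrank_inj A_inj); apply/eqP.
by rewrite eqn_leq (mxrank_le_span A_span) andbT -mulmx_sel mxrankM_maxl.
Qed.

Variables (V0 : {set 'I_m}) (r : nat) (f0 : 'I_r -> 'I_m).
Hypotheses (f0_inj : injective f0) (f0V0 : V0 =i codom f0) (V0_forest : forest B V0).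
Variables (C : 'M[F]_(r, m)) (BC : colsub f0 B *m C = B).

Lemma forest_card_eq (V : {set 'I_m}) : forest B V -> #|V| = r.
Proof.
move=> V_forest; rewrite (forest_card V_forest) -(forest_card V0_forest).
by rewrite (eq_card f0V0) (card_codom f0_inj) card_ord.
Qed.

Lemma forest_minor_neq0 (V : {set 'I_m}) (f : 'I_r -> 'I_m) : injective f -> V =i codom f ->
  forest B V <-> \det (colsub f C) != 0.
Proof.
move=> f_inj fV; have [A0_inj A0_span] := (forest_colsubP f0_inj f0V0).1 V0_forest.
have AE : colsub f B = colsub f0 B *m colsub f C by rewrite mulmx_colsub BC.
rewrite (forest_colsubP f_inj fV) AE; split=> [[A_inj _] | detM].
  apply/negP; rewrite -det_tr => /det0P [v v_neq0 vM]; move/negP: v_neq0; apply.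
  have : (colsub f0 B *m colsub f C) *m v^T = 0.
    by rewrite -mulmxA -[_ *m v^T]trmxK trmx_mul trmxK vM trmx0 mulmx0.
  by move/A_inj/(congr1 trmx); rewrite trmxK trmx0 => ->.
have M_unit : colsub f C \in unitmx by rewrite unitmxE unitfE.
split=> x.
  rewrite -mulmxA => /A0_inj /(congr1 (mulmx (invmx (colsub f C)))).
  by rewrite mulmxA mulVmx // mul1mx mulmx0.
have [u Au] := A0_span x; exists (invmx (colsub f C) *m u).
by rewrite -mulmxA (mulmxA (colsub f C)) mulmxV // mul1mx.
Qed.

End Forest.

Arguments forest_colsubP {F n m B V r f}.

(** * Torsion and the Smith normal form *)

(* [bnd_on], [tors_on] and [tors_card_on] are [bnd_int], [tors_int] and
   [is_tors_order] for an arbitrary pair of composable integer matrices. *)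
Definition bnd_on {n m} (Bd : 'M[int]_(n, m)) (V : {set 'I_m}) (y : 'cV[int]_n) :=
  exists x : 'cV[int]_m, supp_in x V /\ y = Bd *m x.

Definition tors_on {n m p} (Cy : 'M[int]_(p, n)) (Bd : 'M[int]_(n, m)) V y :=
  Cy *m y = 0 /\ exists k : int, k != 0 /\ bnd_on Bd V (k *: y).

Definition tors_card_on {n m p} (Cy : 'M[int]_(p, n)) (Bd : 'M[int]_(n, m)) V q :=
  exists f : 'I_q -> 'cV[int]_n,
    [/\ forall i, tors_on Cy Bd V (f i),
        forall i j, bnd_on Bd V (f i - f j) -> i = j &
        forall y, tors_on Cy Bd V y -> exists i, bnd_on Bd V (y - f i)].

Section TorsionCard.
Variables (n m p : nat) (Cy : 'M[int]_(p, n)) (Bd : 'M[int]_(n, m)) (V : {set 'I_m}).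

Lemma bnd_onB y y' : bnd_on Bd V y -> bnd_on Bd V y' -> bnd_on Bd V (y - y').
Proof.
move=> [x [x_supp ->]] [x' [x'_supp ->]]; exists (x - x'); split; last first.
  by rewrite mulmxBr.
by move=> i iV; rewrite !mxE x_supp // x'_supp // subrr.
Qed.

Lemma tors_card_on_le q q' :
  tors_card_on Cy Bd V q -> tors_card_on Cy Bd V q' -> (q <= q')%N.
Proof.
move=> [t [t_tors t_sep _]] [t' [_ _ t'_cover]].
pose h i := proj1_sig (cid (t'_cover _ (t_tors i))).
have hP i : bnd_on Bd V (t i - t' (h i)) := proj2_sig (cid (t'_cover _ (t_tors i))).
have h_inj : injective h.
  move=> i j hij; apply: t_sep.
  by have := bnd_onB (hP i) (hP j); rewrite hij opprB addrA subrK.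
by have := leq_card h h_inj; rewrite !card_ord.
Qed.

Lemma tors_card_on_uniq q q' :
  tors_card_on Cy Bd V q -> tors_card_on Cy Bd V q' -> q = q'.
Proof.
by move=> tq tq'; apply/eqP; rewrite eqn_leq !(tors_card_on_le tq, tors_card_on_le tq').
Qed.

Lemma bnd_on_colsubE r (f : 'I_r -> 'I_m) : injective f -> V =i codom f ->
  forall y, bnd_on Bd V y <-> exists u, y = colsub f Bd *m u.
Proof.
move=> f_inj fV y; split=> [[x [x_supp ->]] | [u ->]].
  by exists (rowsub f x); rewrite -mulmx_sel -mulmxA (sel_mulmx_rowsub_supp fV).
exists (sel_mx f *m u); split; first exact: supp_sel_mulmx.
by rewrite mulmxA mulmx_sel.
Qed.

End TorsionCard.

Lemma map_mx_intr_inj (F : numDomainType) n m :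
  injective (map_mx (intr : int -> F) : 'M_(n, m) -> 'M_(n, m)).
Proof.
by move=> A B /matrixP AB; apply/matrixP => i j; have := AB i j; rewrite !mxE => /intr_inj.
Qed.

Definition Smith_diag n r (dd : seq int) : 'M[int]_(n, r) :=
  \matrix_(i, j) (dd`_i *+ (i == j :> nat)).

Lemma Smith_diag_col r k (dd : seq int) :
  Smith_diag (r + k) r dd = col_mx (diag_mx (\row_i dd`_i)) 0.
Proof.
apply/matrixP => i j; rewrite mxE; case: (split_ordP i) => i' ->.
  by rewrite col_mxEu !mxE.
by rewrite col_mxEd mxE /= gtn_eqF // ltn_addr.
Qed.

Lemma Smith_diag_neq0 (F : numFieldType) n r (A : 'M[int]_(n, r))
    (L : 'M[int]_n) (Rm : 'M[int]_r) (dd : seq int) :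
  (forall x : 'cV[F]_r, map_mx intr A *m x = 0 -> x = 0) ->
  Rm \in unitmx -> A = L *m Smith_diag n r dd *m Rm ->
  (forall i : 'I_r, dd`_i != 0) /\ (r <= n)%N.
Proof.
move=> A_inj Rm_unit AE.
suff diag_neq0 (i : 'I_r) : (i < n)%N && (dd`_i != 0).
  split=> [i | ]; first by case/andP: (diag_neq0 i).
  by rewrite leqNgt; apply/negP => nr; have := diag_neq0 (Ordinal nr); rewrite ltnn.
apply/negPn/negP => zero_col.
pose x : 'cV[int]_r := invmx Rm *m delta_mx i 0.
have Ax : A *m x = 0.
  rewrite AE -!mulmxA (mulmxA Rm) mulmxV // mul1mx -colE.
  suff -> : col i (Smith_diag n r dd) = 0 by rewrite mulmx0.
  apply/matrixP => a b; rewrite !mxE; case: eqP => // ai; rewrite mulr1n.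
  by apply/eqP; apply: contraNT zero_col => dd_neq0; rewrite -ai ltn_ord.
have : map_mx (intr : int -> F) x = map_mx intr 0.
  by rewrite map_mx0; apply: A_inj; rewrite -map_mxM Ax map_mx0.
move/map_mx_intr_inj/(congr1 (mulmx Rm)).
rewrite mulmxA mulmxV // mul1mx mulmx0 => /matrixP /(_ i 0).
by rewrite !mxE !eqxx.
Qed.

Lemma eq_nat_mod_absz (a b : nat) (d w : int) :
  (a < `|d|)%N -> (b < `|d|)%N -> a%:Z - b%:Z = d * w -> a = b.
Proof.
move=> ad bd E; have aE : a%:Z = w * d + b%:Z by rewrite mulrC -E subrK.
have : (a %% d)%Z = (b %% d)%Z by rewrite aE modzMDl.
by rewrite -!(modz_abs _ d) !modz_nat !modn_small // => -[].
Qed.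

Section SmithTorsion.
Variables (m p r k : nat) (Cy : 'M[int]_(p, r + k)) (Bd : 'M[int]_(r + k, m)).
Hypothesis CyBd : Cy *m Bd = 0.
Variables (V : {set 'I_m}) (f : 'I_r -> 'I_m).
Hypotheses (f_inj : injective f) (fV : V =i codom f).
Variables (L : 'M[int]_(r + k)) (Rm : 'M[int]_r) (dd : seq int).
Hypotheses (L_unit : L \in unitmx) (Rm_unit : Rm \in unitmx).
Hypothesis dd_neq0 : forall i : 'I_r, dd`_i != 0.
Let Dl := diag_mx (\row_(i < r) dd`_i).
Hypothesis BdE : colsub f Bd = L *m col_mx Dl 0 *m Rm.

Let Li := invmx L.
Let LiL : Li *m L = 1%:M. Proof. exact: mulVmx. Qed.

Lemma bnd_on_SmithE y : bnd_on Bd V y <-> exists w, Li *m y = col_mx (Dl *m w) 0.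
Proof.
rewrite (bnd_on_colsubE _ f_inj fV); split=> [[u ->] | [w Liy]].
  by exists (Rm *m u); rewrite BdE !mulmxA LiL mul1mx !mul_col_mx !mul0mx.
exists (invmx Rm *m w).
rewrite -[y]mul1mx -(mulmxV L_unit) -mulmxA -/Li Liy BdE -!mulmxA; congr (L *m _).
by rewrite (mulmxA Rm) mulmxV // mul1mx mul_col_mx mul0mx.
Qed.

Lemma tors_on_SmithE y : tors_on Cy Bd V y <-> dsubmx (Li *m y) = 0.
Proof.
have detDl : \det Dl != 0.
  by rewrite det_diag; apply/prodf_neq0 => i _; rewrite mxE.
split=> [[_ [c [c_neq0 /bnd_on_SmithE [w]]]] | Liy_d].
  rewrite -scalemxAr -[Li *m y]vsubmxK scale_col_mx => /eq_col_mx [_ /eqP].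
  by rewrite scalemx_eq0 (negbTE c_neq0) col_mxKd => /eqP.
set u := usubmx (Li *m y).
have Liy : Li *m y = col_mx u 0 by rewrite -Liy_d vsubmxK.
have detDl_y : bnd_on Bd V (\det Dl *: y).
  apply/bnd_on_SmithE.
  exists (\adj Dl *m u).
  by rewrite -scalemxAr Liy mulmxA mul_mx_adj mul_scalar_mx scale_col_mx scaler0.
split; last by exists (\det Dl).
have [x [_ yE]] := detDl_y.
have : Cy *m (\det Dl *: y) = 0 by rewrite yE mulmxA CyBd mul0mx.
by rewrite -scalemxAr => /eqP; rewrite scalemx_eq0 (negbTE detDl) => /eqP.
Qed.

(* Representatives of the torsion classes: [L] applied to the vectors
   [col_mx t 0] with [0 <= t i < |dd`_i|]. *)
Lemma tors_card_on_Smith : tors_card_on Cy Bd V (absz (\prod_(i < r) dd`_i)).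
Proof.
pose T := {dffun forall i : 'I_r, 'I_(absz dd`_i)}.
pose g (t : T) := L *m col_mx (\col_i ((t i : nat)%:Z)) 0.
have Lig t : Li *m g t = col_mx (\col_i ((t i : nat)%:Z)) 0.
  by rewrite /g mulmxA LiL mul1mx.
have -> : absz (\prod_(i < r) dd`_i) = #|T|.
  rewrite card_dep_ffun foldrE big_map big_enum /=.
  rewrite (@big_morph _ _ absz 1%N muln 1%R *%R abszM (erefl 1%N)) /=.
  by apply: eq_bigr => i _; rewrite card_ord.
exists (fun i => g (enum_val i)); split.
- by move=> i; apply/tors_on_SmithE; rewrite Lig col_mxKd.
- move=> i j /bnd_on_SmithE [w].
  rewrite mulmxBr !Lig opp_col_mx add_col_mx subrr => /eq_col_mx [E _].
  apply: enum_val_inj; apply/ffunP => l; apply: val_inj => /=.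
  have := congr1 (fun M : 'cV[int]_r => M l 0) E; rewrite mul_diag_mx !mxE.
  by apply: eq_nat_mod_absz; rewrite ltn_ord.
- move=> y /tors_on_SmithE Liy_d.
  set u := usubmx (Li *m y).
  have Liy : Li *m y = col_mx u 0 by rewrite -Liy_d vsubmxK.
  clearbody u.
  have mod_lt (l : 'I_r) : (absz ((u l ord0 %% dd`_l)%Z)%R < absz (dd`_l)%R)%N.
    by rewrite -ltz_nat !abszE (ger0_norm (modz_ge0 _ (dd_neq0 l))) ltz_mod.
  exists (enum_rank ([ffun l => Ordinal (mod_lt l)] : T)); rewrite enum_rankK.
  apply/bnd_on_SmithE; exists (\col_l ((u l ord0 %/ dd`_l)%Z)).
  rewrite mulmxBr Lig Liy opp_col_mx add_col_mx subrr; congr col_mx.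
  apply/matrixP => l z; rewrite (ord1 z) mul_diag_mx !mxE ffunE /=.
  rewrite abszE (ger0_norm (modz_ge0 _ (dd_neq0 l))).
  by rewrite {1}(divz_eq (u l ord0) (dd`_l)) addrK mulrC.
Qed.
End SmithTorsion.

Lemma normr_intr (F : numDomainType) (z : int) : `|(z%:~R : F)| = (absz z)%:R.
Proof. by rewrite -intr_norm -abszE. Qed.

Lemma absz_unit (z : int) : z \is a GRing.unit -> absz z = 1%N.
Proof.
move/mulrV/(congr1 absz); rewrite abszM /=.
by move/eqP; rewrite muln_eq1 => /andP [/eqP -> _].
Qed.

(* The unimodular [Q = L0^-1 L] maps the column space of [col_mx D 0] into that
   of [col_mx D0 0], so it is block upper triangular with a unimodular
   upper-left block [Qul], and [Qul D = D0 W] with [|det W| = |det M|]. *)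
Lemma Smith_prod_det (F : realFieldType) r k (L L0 : 'M[int]_(r + k))
    (Rm Rm0 : 'M[int]_r) (dd dd0 : seq int) (M : 'M[F]_r) :
  L \in unitmx -> L0 \in unitmx -> Rm \in unitmx -> Rm0 \in unitmx ->
  (forall i : 'I_r, dd`_i != 0) ->
  map_mx intr (L *m Smith_diag (r + k) r dd *m Rm) =
    map_mx intr (L0 *m Smith_diag (r + k) r dd0 *m Rm0) *m M ->
  ((absz (\prod_(i < r) dd`_i))%:R : F) = (absz (\prod_(i < r) dd0`_i))%:R * `|\det M|.
Proof.
move=> L_unit L0_unit Rm_unit Rm0_unit dd_neq0; rewrite !Smith_diag_col.
set D := diag_mx (\row_i dd`_i); set D0 := diag_mx (\row_i dd0`_i) => E.
set Q := invmx L0 *m L.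
set W := map_mx intr Rm0 *m M *m map_mx (intr : int -> F) (invmx Rm).
have QDE : map_mx intr Q *m map_mx intr (col_mx D 0) = map_mx intr (col_mx D0 0) *m W.
  have := congr1 (fun A => map_mx (intr : int -> F) (invmx L0) *m A
                              *m map_mx intr (invmx Rm)) E.
  rewrite /= !map_mxM -!mulmxA -map_mxM mulmxV // map_mx1 mulmx1.
  rewrite (mulmxA (map_mx intr (invmx L0)) (map_mx intr L0)) -(map_mxM _ (invmx L0) L0).
  by rewrite mulVmx // map_mx1 mul1mx => ->; rewrite /W !mulmxA.
rewrite -[Q]submxK map_block_mx !map_col_mx !map_mx0 mul_block_col in QDE.
rewrite !mulmx0 !addr0 mul_col_mx mul0mx in QDE.
case/eq_col_mx: QDE => QulDE QdlDE.
have D_unit : map_mx (intr : int -> F) D \in unitmx.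
  rewrite unitmxE det_map_mx unitfE intr_eq0 det_diag.
  by apply/prodf_neq0 => i _; rewrite mxE.
have Qdl0 : dlsubmx Q = 0.
  apply: (@map_mx_intr_inj F); rewrite map_mx0.
  by rewrite -[LHS](mulmxK D_unit) QdlDE mul0mx.
have Qul_unit : \det (ulsubmx Q) \is a GRing.unit.
  have : Q \in unitmx by rewrite unitmx_mul unitmx_inv L0_unit L_unit.
  by rewrite unitmxE -[Q]submxK Qdl0 det_ublock unitrM block_mxKul => /andP [].
have := congr1 determinant QulDE.
rewrite !det_mulmx !det_map_mx => /(congr1 (fun x : F => `|x|)).
rewrite /= !normrM !normr_intr (absz_unit Qul_unit).
rewrite (absz_unit (_ : \det Rm0 \is a GRing.unit)) -?unitmxE //.
rewrite (absz_unit (_ : \det (invmx Rm) \is a GRing.unit)) -?unitmxE ?unitmx_inv //.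
rewrite !mul1r mulr1 /D /D0 !det_diag.
by under eq_bigr do rewrite mxE; under [in RHS]eq_bigr do rewrite mxE.
Qed.

Section ForestTorsion.
Variables (F : realFieldType) (n m p : nat) (Cy : 'M[int]_(p, n)) (Bz : 'M[int]_(n, m)).
Hypothesis CyBz : Cy *m Bz = 0.
Let B := map_mx (intr : int -> F) Bz.
Variables (V0 : {set 'I_m}) (r : nat) (f0 : 'I_r -> 'I_m).
Hypotheses (f0_inj : injective f0) (f0V0 : V0 =i codom f0) (V0_forest : forest B V0).
Variables (C : 'M[F]_(r, m)) (BC : colsub f0 B *m C = B).

Lemma forest_minor_tors_card (V : {set 'I_m}) (f : 'I_r -> 'I_m) :
  injective f -> V =i codom f -> forest B V ->
  exists q q0, [/\ tors_card_on Cy Bz V q, tors_card_on Cy Bz V0 q0, q0 != 0%N &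
                   (q%:R : F) = q0%:R * `|\det (colsub f C)|].
Proof.
move=> f_inj fV V_forest.
have colsub_inj (g : 'I_r -> 'I_m) (W : {set 'I_m}) :
    injective g -> W =i codom g -> forest B W ->
    forall x : 'cV[F]_r, map_mx intr (colsub g Bz) *m x = 0 -> x = 0.
  move=> g_inj gW /(forest_colsubP g_inj gW) [A_inj _] x.
  by rewrite map_mxsub; apply: A_inj.
have [L0 L0_unit [Rm0 Rm0_unit [dd0 _ A0E]]] := int_Smith_normal_form (colsub f0 Bz).
have [dd0_neq0 rn] := Smith_diag_neq0 (colsub_inj _ _ f0_inj f0V0 V0_forest) Rm0_unit A0E.
have [L L_unit [Rm Rm_unit [dd _ AE]]] := int_Smith_normal_form (colsub f Bz).
have [dd_neq0 _] := Smith_diag_neq0 (colsub_inj _ _ f_inj fV V_forest) Rm_unit AE.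
have [k nE] : exists k, n = (r + k)%N by exists (n - r)%N; rewrite subnKC.
subst n.
exists (absz (\prod_(i < r) dd`_i)), (absz (\prod_(i < r) dd0`_i)); split.
- apply: (tors_card_on_Smith CyBz f_inj fV L_unit Rm_unit dd_neq0).
  by rewrite -Smith_diag_col.
- apply: (tors_card_on_Smith CyBz f0_inj f0V0 L0_unit Rm0_unit dd0_neq0).
  by rewrite -Smith_diag_col.
- by rewrite absz_eq0; apply/prodf_neq0 => i _.
apply: (Smith_prod_det L_unit L0_unit Rm_unit Rm0_unit dd_neq0).
by rewrite -AE -A0E !map_mxsub mulmx_colsub BC.
Qed.

End ForestTorsion.

(** * The mesh matrix *)

Lemma cbd_cbd d (X : cw_chain d) : (0 < d)%N -> cbd X d.-1 *m cbd X d = 0.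
Proof. by case: d X => [//|[|d]] X _ /=; [rewrite mul0mx | exact: bd_bd]. Qed.

Lemma tors_orderE d (X : cw_chain d) V q :
  tors_card_on (cbd X d.-1) (cbd X d) V q -> tors_order X V = q.
Proof.
move=> Vq; apply: (tors_card_on_uniq _ Vq).
exact: (epsilon_spec (inhabits 0%N) (is_tors_order X V) (ex_intro _ q Vq)).
Qed.

Lemma gram_cdot (R : realType) n N (x : 'I_N -> 'cV[R]_n) :
  \matrix_(a, b) cdot (x a) (x b) =
  (\matrix_(c, a) x a c 0)^T *m \matrix_(c, a) x a c 0.
Proof. by apply/matrixP => a b; rewrite !mxE; apply: eq_bigr => c _; rewrite !mxE. Qed.

Section MeshMatrix.
Variables (R : realType) (d : nat) (X : cw_chain d) (V0 : {set 'I_(ncell X d)}).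
Hypotheses (d_gt0 : (0 < d)%N) (V0_forest : spanning_forest R X V0).
Variables (N : nat) (e : 'I_N -> 'I_(ncell X d)).
Hypotheses (e_inj : injective e) (eV0 : forall c, c \notin V0 <-> exists a, e a = c).
Variable D : 'I_N -> 'cV[R]_(ncell X d).
Hypothesis DE : forall a, supp_in (D a) V0 /\ bdR R X *m D a = bdR R X *m cell R (e a).

Local Notation m := (ncell X d).
Let B := bdR R X.
Let r := #|V0|.
Let f0 : 'I_r -> 'I_m := enum_val.
Let f0_inj : injective f0. Proof. exact: enum_val_inj. Qed.
Let f0V0 : V0 =i codom f0. Proof. exact: enum_val_codom. Qed.
Let eV0C : ~: V0 =i codom e.
Proof.
move=> c; rewrite in_setC; apply/idP/codomP => [/eV0 [a <-] | [a ->]]; first by exists a.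
by apply/eV0; exists a.
Qed.

(* [Df] extends [D] to all d-cells by [Df c = c] on [V0]; [C] is the matrix of
   V0-coordinates of all the [Df c], i.e. the matrix [A = [Id | P]] above. *)
Let Df c := if [pick a | e a == c] is Some a then D a else cell R c.
Let C : 'M[R]_(r, m) := rowsub f0 (\matrix_(i, c) Df c i 0).
Let Dm : 'M[R]_(m, N) := \matrix_(c, a) D a c 0.
Let P := rowsub f0 Dm.

Let Df_e a : Df (e a) = D a.
Proof. by rewrite /Df; case: pickP => [a' /eqP /e_inj -> // | /(_ a)]; rewrite eqxx. Qed.

Let e_notin a : e a \notin V0. Proof. by apply/eV0; exists a. Qed.

Let Df_V0 c : c \in V0 -> Df c = cell R c.
Proof.
move=> cV0; rewrite /Df; case: pickP => [a /eqP ea | //].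
by move: cV0; rewrite -ea (negbTE (e_notin a)).
Qed.

Let Df_supp c : supp_in (Df c) V0.
Proof.
have [cV0 | /eV0 [a <-]] := boolP (c \in V0); last by rewrite Df_e; case: (DE a).
by rewrite Df_V0 // => i iV0; rewrite mxE; case: eqP => // ic; rewrite ic cV0 in iV0.
Qed.

Let B_Df c : B *m Df c = B *m cell R c.
Proof.
have [cV0 | /eV0 [a <-]] := boolP (c \in V0); first by rewrite Df_V0.
by rewrite Df_e; case: (DE a).
Qed.

Let BC : colsub f0 B *m C = B.
Proof.
rewrite -mulmx_sel -mulmxA (sel_mulmx_rowsub f0V0 f0_inj) => [|i c iV0]; last first.
  by rewrite mxE Df_supp.
apply/matrixP => i c; have := congr1 (fun x : 'cV[R]_(ncell X d.-1) => x i ord0) (B_Df c).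
by rewrite /cell -colE !mxE => <-; apply: eq_bigr => k _; rewrite !mxE.
Qed.

Let C_f0 : colsub f0 C = 1%:M.
Proof.
apply/matrixP => i j; rewrite !mxE Df_V0 ?f0V0 ?codom_f //.
by rewrite mxE (inj_eq f0_inj) andbT.
Qed.

Let C_e : colsub e C = P.
Proof. by apply/matrixP => i a; rewrite !mxE Df_e. Qed.

Let Dm_e : rowsub e Dm = 0.
Proof. by apply/matrixP => a b; rewrite !mxE; case: (DE b) => D_supp _; rewrite D_supp. Qed.

Let Dm_f0 : Dm = sel_mx f0 *m P.
Proof.
rewrite (sel_mulmx_rowsub f0V0 f0_inj) // => c a cV0.
by rewrite mxE; case: (DE a) => D_supp _; rewrite D_supp.
Qed.

Lemma mesh_decomp :
  \matrix_(a, b) cdot (cell R (e a) - D a) (cell R (e b) - D b) =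
  1%:M + \matrix_(a, b) cdot (D a) (D b).
Proof.
rewrite !gram_cdot.
have -> : \matrix_(c, a) (cell R (e a) - D a) c 0 = sel_mx e - Dm.
  by apply/matrixP => c a; rewrite !mxE andbT.
have DmS : Dm^T *m sel_mx e = 0.
  by rewrite -[_ *m _]trmxK trmx_mul trmxK tr_sel_mulmx Dm_e trmx0.
rewrite [(_ - _)^T]linearB /= mulmxBl !mulmxBr !tr_sel_mulmx rowsub_sel // Dm_e DmS.
by rewrite subr0 sub0r opprK.
Qed.

Lemma meshS_gram : \matrix_(a, b) cdot (D a) (D b) = P^T *m P.
Proof. by rewrite gram_cdot -/Dm {1}Dm_f0 trmx_mul -mulmxA tr_sel_mulmx. Qed.

Let sf (V : {set 'I_m}) := `[< spanning_forest R X V >].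
Let w (V : {set 'I_m}) : R := ((tors_order X V)%:R / (tors_order X V0)%:R) ^+ 2.

Lemma forest_minor_sqr (f : 'I_r -> 'I_m) : injective f ->
  let V := [set f i | i : 'I_r] in \det (colsub f C) ^+ 2 = if sf V then w V else 0.
Proof.
move=> f_inj V; have fV := imsetT_codom f.
have minorP := forest_minor_neq0 f0_inj f0V0 V0_forest BC f_inj fV.
rewrite /sf; case: asboolP => V_forest; last first.
  by apply/eqP; rewrite expf_eq0 /=; apply: contraT => /minorP.
have [q [q0 [Vq V0q q0_neq0 qE]]] := forest_minor_tors_card (F := R)
  (cbd_cbd X d_gt0) f0_inj f0V0 V0_forest BC f_inj fV V_forest.
rewrite /w (tors_orderE Vq) (tors_orderE V0q) qE mulrAC divff ?pnatr_eq0 //.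
by rewrite mul1r real_normK // num_real.
Qed.

Let y : 'rV[{poly R}]_m := \row_c (if c \in V0 then 'X else -1).
Let A := map_mx polyC C.

Let AyA : A *m (diag_mx y *m A^T) = 'X%:M - map_mx polyC (P *m P^T).
Proof.
rewrite (mul_diag_tr_split _ _ f0_inj e_inj f0V0 eV0C).
have -> : colsub f0 A = 1%:M by rewrite -map_mxsub C_f0 map_mx1.
have -> : colsub e A = map_mx polyC P by rewrite -map_mxsub C_e.
have -> : colsub f0 y = const_mx 'X by apply/matrixP => i j; rewrite !mxE f0V0 codom_f.
have -> : colsub e y = const_mx (-1).
  by apply/matrixP => i a; rewrite !mxE (negbTE (e_notin a)).
rewrite !diag_const_mx mul1mx trmx1 mulmx1 map_mxM map_trmx mul_scalar_mx scaleN1r.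
by rewrite mulmxN.
Qed.

Lemma det_forest_sum :
  \det ('X%:M - map_mx polyC (P *m P^T)) =
  \sum_(V | sf V) (\prod_(c in V) y 0 c) * (w V)%:P.
Proof.
pose G V := if sf V then (\prod_(c in V) y 0 c) * (w V)%:P else 0.
have term (f : {ffun 'I_r -> 'I_m}) : (\prod_i y 0 (f i)) * \det (colsub f A) ^+ 2 =
    if injectiveb f then G [set f i | i : 'I_r] else 0.
  have [/injectiveP f_inj | /injectivePn [i [j ij fij]]] := boolP (injectiveb f).
    rewrite -map_mxsub det_map_mx -rmorphXn forest_minor_sqr // /G big_imset /=.
      by case: (sf _); rewrite ?polyC0 ?mulr0.
    by move=> i j _ _ /f_inj.
  rewrite -det_tr (determinant_alternate ij) ?expr0n ?mulr0 // => k.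
  by rewrite !mxE fij.
have fact_neq0 : (r`!%:R : {poly R}) != 0.
  by rewrite -polyC_natr polyC_eq0 pnatr_eq0 -lt0n fact_gt0.
apply: (mulfI fact_neq0); rewrite -AyA cauchy_binet_sqr.
under eq_bigr do rewrite term.
rewrite -big_mkcond /= sum_inj_ffun_image mulr_natl; congr (_ *+ _).
rewrite big_mkcond [RHS]big_mkcond; apply: eq_bigr => V _; rewrite /G.
case: (boolP (sf V)) => [/asboolW V_forest | _]; last by case: (_ == _).
by rewrite (forest_card_eq f0_inj f0V0 V0_forest V_forest) eqxx.
Qed.

Let jf (V : {set 'I_m}) := #|V :&: ~: V0|.

Let jf_le V : (jf V <= N)%N.
Proof.
by rewrite -(card_ord N) -(card_codom e_inj) -(eq_card eV0C) subset_leq_card ?subsetIr.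
Qed.

Let forest_weight V : sf V ->
  'X^N * ((\prod_(c in V) y 0 c) * (w V)%:P) =
  'X^r * (((-1) ^+ jf V * w V) *: 'X^(N - jf V)).
Proof.
move/asboolW => V_forest; have Vr := forest_card_eq f0_inj f0V0 V0_forest V_forest.
have jr : (jf V <= r)%N by rewrite -Vr subset_leq_card ?subsetIl.
have VV0 : #|V :&: V0| = (r - jf V)%N by rewrite -Vr -(cardsID V0 V) setDE addnK.
have prodV0 : \prod_(c in V :&: V0) y 0 c = 'X ^+ (r - jf V).
  by rewrite -VV0 -prodr_const; apply: eq_bigr => c /setIP [_ cV0]; rewrite mxE cV0.
have prodNV0 : \prod_(c in V :&: ~: V0) y 0 c = (-1) ^+ jf V.
  by rewrite -prodr_const; apply: eq_bigr => c /setIP [_]; rewrite inE mxE => /negbTE ->.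
rewrite (big_setID V0) /= setDE prodV0 prodNV0 -scalerAr -exprD -mul_polyC.
have -> : (r + (N - jf V) = N + (r - jf V))%N by have := jf_le V; lia.
by rewrite [((-1) ^+ _ * _)%:P]rmorphM rmorph_sign exprD; ring.
Qed.

Lemma det_meshS :
  \det ('X%:M - map_mx polyC (P^T *m P)) =
  \sum_(V | sf V) ((-1) ^+ jf V * w V) *: 'X^(N - jf V).
Proof.
have Xr_neq0 : ('X^r : {poly R}) != 0 by rewrite expf_neq0 // polyX_eq0.
apply: (mulfI Xr_neq0); rewrite map_mxM -map_trmx -det_sub_mulmxC map_trmx -map_mxM.
rewrite det_forest_sum !mulr_sumr; apply: eq_bigr => V; exact: forest_weight.
Qed.

Let w_V0 : w V0 = 1.
Proof.
have := forest_minor_sqr f0_inj; have -> : [set f0 i | i : 'I_r] = V0.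
  by apply/setP => c; rewrite f0V0 imsetT_codom.
by rewrite C_f0 det1 expr1n /sf asboolT.
Qed.

Let forest_jf0 V : sf V && (jf V == 0%N) = (V == V0).
Proof.
apply/idP/eqP => [/andP [/asboolW V_forest] | ->]; last first.
  by rewrite /sf asboolT // /jf setICr cards0.
rewrite cards_eq0 setI_eq0 disjoints_subset setCK => VV0.
by apply/eqP; rewrite eqEcard VV0 (forest_card_eq f0_inj f0V0 V0_forest V_forest) /r leqnn.
Qed.

Lemma char_poly_mesh :
  \det (('X + 1)%:M - map_mx polyC
           (\matrix_(a, b) cdot (cell R (e a) - D a) (cell R (e b) - D b))) =
  \det ('X%:M - map_mx polyC (\matrix_(a, b) cdot (D a) (D b))).
Proof. by rewrite mesh_decomp map_mxD map_mx1 [('X + 1)%:M]raddfD opprD addrA addrK. Qed.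

Lemma char_poly_meshS :
  \det ('X%:M - map_mx polyC (\matrix_(a, b) cdot (D a) (D b))) =
  'X^N + \sum_(1 <= j < N.+1)
           ((-1) ^+ j * \sum_(V | sf V && (#|V :&: ~: V0| == j)) w V) *: 'X^(N - j).
Proof.
rewrite meshS_gram det_meshS.
rewrite (@sum_partition_nat _ _ _ jf N.+1 (fun V j => ((-1) ^+ j * w V) *: 'X^(N - j)))
  => [|V _]; last by rewrite ltnS jf_le.
rewrite big_ltn // (eq_bigl _ _ forest_jf0) big_pred1_eq w_V0 mulr1 expr0 scale1r subn0.
congr (_ + _); apply: eq_bigr => j _.
by rewrite mulr_sumr scaler_suml.
Qed.

End MeshMatrix.

Unset Implicit Arguments.
Set Strict Implicit.

Theorem theorem8p2 (R : realType) (d : nat) (hd : (0 < d)%N) (X : cw_chain d)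
  (V0 : {set 'I_(ncell X d)}) (hV0 : spanning_forest R X V0)
  (N : nat) (e : 'I_N -> 'I_(ncell X d)) (he_inj : injective e)
  (he_im : forall c, c \notin V0 <-> exists a, e a = c)
  (D : 'I_N -> 'cV[R]_(ncell X d))
  (hD : forall a, supp_in (D a) V0 /\ bdR R X *m D a = bdR R X *m cell R (e a)) :
  let z a := cell R (e a) - D a in
  let Mesh := \matrix_(a < N, b < N) cdot (z a) (z b) in
  let MeshS := \matrix_(a < N, b < N) cdot (D a) (D b) in
  let c (j : nat) : R :=
    \sum_(V : {set 'I_(ncell X d)} |
            `[< spanning_forest R X V >] && (#|V :&: ~: V0| == j))
      (((tors_order X V)%:R / (tors_order X V0)%:R) ^+ 2) in
  \det (('X + 1)%:M - map_mx polyC Mesh) = \det ('X%:M - map_mx polyC MeshS) /\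
  \det ('X%:M - map_mx polyC MeshS)
    = 'X^N + \sum_(1 <= j < N.+1) ((-1) ^+ j * c j) *: 'X^(N - j).
Proof.
move=> z Mesh MeshS c; split; first exact: (char_poly_mesh he_inj he_im hD).
exact: (char_poly_meshS hd hV0 he_inj he_im hD).
Qed.
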